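(* Let $H,\mathsf H$ be semigroups, $\mathfrak h\colon H\to\mathsf H$ a homomorphism, $X$ an $H$-set, $S$ an order-complete ordered $\mathsf H$-set with completion $\overline S$, and $f\colon X\to\overline S$. Then the lower envelopes $\mathrm{lE}^f_{\mathcal H}$, $\mathrm{lE}^f_{\overline{\mathcal H}}$, $\mathrm{lE}^f_{\mathcal H_{\le}}$ all belong to $\mathcal H_{\le}$, and the upper envelopes $\mathrm{uE}_f^{\mathcal H}$, $\mathrm{uE}_f^{\overline{\mathcal H}}$, $\mathrm{uE}_f^{\mathcal H_{\ge}}$ all belong to $\mathcal H_{\ge}$. If moreover $\mathsf H$ is a group, then $\mathrm{lE}^f_{\mathcal H}$, $\mathrm{lE}^f_{\overline{\mathcal H}}$, $\mathrm{uE}_f^{\mathcal H}$, $\mathrm{uE}_f^{\overline{\mathcal H}}$ all belong to $\overline{\mathcal H}$.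
   Context: $X$ is an $H$-set: an action $(h,x)\mapsto hx$ with $h_1(h_2x)=(h_1h_2)x$ (and $1x=x$ if $H$ has identity $1$); similarly $S$ is an $\mathsf H$-set, with a partial order $\leqslant$ such that $s_1\leqslant s_2\Rightarrow\mathsf h s_1\leqslant\mathsf h s_2$. $S$ is order-complete: every nonempty subset bounded below (above) in $S$ has an infimum (supremum) in $S$. The completion $\overline S$ adjoins a new least element $\inf S$ if $S$ has none and a new greatest element $\sup S$ if $S$ has none; the action is extended by $\mathsf h\cdot\inf S=\inf S$, $\mathsf h\cdot\sup S=\sup S$ for the adjoined symbols; in $\overline S$, $\sup\varnothing$ is the least and $\inf\varnothing$ the greatest element. Functions $X\to\overline S$ are ordered pointwise; $S$-valued functions are regarded as $\overline S$-valued. Classes: $\mathcal H$ = functions $\varphi\colon X\to S$ with $\varphi(hx)=\mathfrak h(h)\varphi(x)$ for all $h\in H,x\in X$; $\overline{\mathcal H}$ = functions $\varphi\colon X\to\overline S$ with the same identity; $\mathcal H_{\le}$ = functions $\varphi\colon X\to\overline S$ with $\varphi(hx)\leqslant\mathfrak h(h)\varphi(x)$ for all $h,x$; $\mathcal H_{\ge}$ = functions $\varphi\colon X\to\overline S$ with $\mathfrak h(h)\varphi(x)\leqslant\varphi(hx)$ for all $h,x$. For a class $\Phi$ of functions $X\to\overline S$: the lower $\Phi$-envelope is $\mathrm{lE}^f_\Phi(x)=\sup\{\varphi(x):\varphi\in\Phi,\ \varphi\leqslant f\text{ on }X\}$, and the upper $\Phi$-envelope is $\mathrm{uE}_f^\Phi(x)=\inf\{\varphi(x):\varphi\in\Phi,\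 f\leqslant\varphi\text{ on }X\}$, with sup/inf taken in $\overline S$. *)

From Stdlib Require Import Classical ClassicalEpsilon.

(* Carrier of the completion: S possibly with an adjoined bottom / top. *)
Inductive ext (S : Type) : Type := EBot | EMid (s : S) | ETop.
Arguments EBot {S}.
Arguments EMid {S} s.
Arguments ETop {S}.

Definition semigroup (G : Type) (mul : G -> G -> G) : Prop :=
  forall a b c, mul a (mul b c) = mul (mul a b) c.

Definition is_identity (G : Type) (mul : G -> G -> G) (e : G) : Prop :=
  forall a, mul e a = a /\ mul a e = a.

Definition is_group (G : Type) (mul : G -> G -> G) : Prop :=
  exists e, is_identity G mul e /\
    forall a, exists b, mul a b = e /\ mul b a = e.

Definition semigroup_hom (G K : Type) (mulG : G -> G -> G) (mulK : K -> K -> K)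
  (h : G -> K) : Prop := forall a b, h (mulG a b) = mulK (h a) (h b).

Definition semigroup_action (G Y : Type) (mul : G -> G -> G) (act : G -> Y -> Y) : Prop :=
  (forall a b y, act a (act b y) = act (mul a b) y) /\
  (forall e, is_identity G mul e -> forall y, act e y = y).

Definition partial_order (S : Type) (le : S -> S -> Prop) : Prop :=
  (forall s, le s s) /\ (forall s t, le s t -> le t s -> s = t) /\
  (forall s t u, le s t -> le t u -> le s u).

Section Completion.
Variables (S : Type) (le : S -> S -> Prop).

Definition is_glbS (A : S -> Prop) (m : S) : Prop :=
  (forall s, A s -> le m s) /\ (forall b, (forall s, A s -> le b s) -> le b m).
Definition is_lubS (A : S -> Prop) (m : S) : Prop :=
  (forall s, A s -> le s m) /\ (forall b, (forall s, A s -> le s b) -> le m b).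

Definition order_complete : Prop :=
  (forall A : S -> Prop, (exists s, A s) -> (exists b, forall s, A s -> le b s) ->
     exists m, is_glbS A m) /\
  (forall A : S -> Prop, (exists s, A s) -> (exists b, forall s, A s -> le s b) ->
     exists m, is_lubS A m).

Definition has_least : Prop := exists m, forall s, le m s.
Definition has_greatest : Prop := exists m, forall s, le s m.

Definition adm (e : ext S) : Prop :=
  match e with
  | EBot => ~ has_least
  | EMid _ => True
  | ETop => ~ has_greatest
  end.

Definition Sbar : Type := { e : ext S | adm e }.

Definition exle (u v : ext S) : Prop :=
  match u, v with
  | EBot, _ => True
  | _, ETop => True
  | EMid a, EMid b => le a b
  | _, _ => False
  end.

Definition lebar (u v : Sbar) : Prop := exle (proj1_sig u) (proj1_sig v).

Definition is_lub (A : Sbar -> Prop) (u : Sbar) : Prop :=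
  (forall v, A v -> lebar v u) /\ (forall w, (forall v, A v -> lebar v w) -> lebar u w).
Definition is_glb (A : Sbar -> Prop) (u : Sbar) : Prop :=
  (forall v, A v -> lebar u v) /\ (forall w, (forall v, A v -> lebar w v) -> lebar w u).

Lemma Sbar_inhabited : inhabited Sbar.
Proof.
  destruct (classic has_least) as [[m _] | n].
  - exact (inhabits (exist adm (EMid m) I)).
  - exact (inhabits (exist adm EBot n)).
Qed.

Definition supbar (A : Sbar -> Prop) : Sbar := epsilon Sbar_inhabited (is_lub A).
Definition infbar (A : Sbar -> Prop) : Sbar := epsilon Sbar_inhabited (is_glb A).

Variables (Hs : Type) (actS : Hs -> S -> S).

Definition extact (a : Hs) (e : ext S) : ext S :=
  match e with
  | EMid s => EMid (actS a s)
  | EBot => EBot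
  | ETop => ETop
  end.

Lemma adm_extact a e : adm e -> adm (extact a e).
Proof. destruct e; simpl; auto. Qed.

Definition actbar (a : Hs) (u : Sbar) : Sbar :=
  exist adm (extact a (proj1_sig u)) (adm_extact a _ (proj2_sig u)).

Variables (H X : Type) (actX : H -> X -> X) (h : H -> Hs).

Definition equivariant (phi : X -> Sbar) : Prop :=
  forall a x, phi (actX a x) = actbar (h a) (phi x).
Definition classH (phi : X -> Sbar) : Prop :=
  (forall x, exists s, proj1_sig (phi x) = EMid s) /\ equivariant phi.
Definition classHbar (phi : X -> Sbar) : Prop := equivariant phi.
Definition classHle (phi : X -> Sbar) : Prop :=
  forall a x, lebar (phi (actX a x)) (actbar (h a) (phi x)).
Definition classHge (phi : X -> Sbar) : Prop :=
  forall a x, lebar (actbar (h a) (phi x)) (phi (actX a x)).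

Definition lE (Phi : (X -> Sbar) -> Prop) (f : X -> Sbar) (x : X) : Sbar :=
  supbar (fun v => exists phi, Phi phi /\ (forall y, lebar (phi y) (f y)) /\ v = phi x).
Definition uE (Phi : (X -> Sbar) -> Prop) (f : X -> Sbar) (x : X) : Sbar :=
  infbar (fun v => exists phi, Phi phi /\ (forall y, lebar (f y) (phi y)) /\ v = phi x).

End Completion.

(** Each member [phi] of the classes [H], [H-bar] and [H_<=] satisfies
    [phi (a x) <= h a . phi x <= h a . lE x], the second step because [h a]
    acts monotonically on the completion; taking the supremum over [phi] gives
    [lE (a x) <= h a . lE x], and upper envelopes are dual.  When the target
    semigroup is a group, [h a] acts on the completion by an order
    automorphism, which commutes with suprema and infima; this gives the
    reverse inequality for the two equivariant classes. *)

From Stdlib Require Import Classical ClassicalEpsilon Program.Basics.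

Section CompletionOrder.

Variables (S : Type) (le : S -> S -> Prop).

Lemma Sbar_eq (u v : Sbar S le) : proj1_sig u = proj1_sig v -> u = v.
Proof.
  destruct u as [e p], v as [e' q]; simpl; intros <-.
  f_equal; apply proof_irrelevance.
Qed.

Lemma lebar_top (u v : Sbar S le) : proj1_sig v = ETop -> lebar S le u v.
Proof. destruct u as [[|s|] p]; unfold lebar; intros ->; exact I. Qed.

Lemma Sbar_has_bottom : exists b : Sbar S le, forall v, lebar S le b v.
Proof.
  destruct (classic (has_least S le)) as [[m Hm] | noLeast].
  - exists (exist _ (EMid m) I).
    intros [[|s|] p]; unfold lebar; simpl; auto.
    apply p; exists m; exact Hm.
  - exists (exist _ EBot noLeast); intros v; exact I.
Qed.

Hypothesis Hpo : partial_order S le.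

Lemma lebar_refl (u : Sbar S le) : lebar S le u u.
Proof. destruct u as [[|s|] p]; unfold lebar; simpl; auto; apply Hpo. Qed.

Lemma lebar_trans (u v w : Sbar S le) :
  lebar S le u v -> lebar S le v w -> lebar S le u w.
Proof.
  destruct u as [[|s|] p], v as [[|t|] q], w as [[|r|] o]; unfold lebar; simpl;
    try tauto.
  apply Hpo.
Qed.

Lemma lebar_antisym (u v : Sbar S le) :
  lebar S le u v -> lebar S le v u -> u = v.
Proof.
  intros Huv Hvu; apply Sbar_eq.
  destruct u as [[|s|] p], v as [[|t|] q]; unfold lebar in *; simpl in *;
    try tauto.
  f_equal; apply Hpo; assumption.
Qed.

Hypothesis Hcompl : order_complete S le.

(** [M] collects the elements of [S] lying in [A]; the supremum is that of [M]
    when [M] is bounded, the adjoined top when it is not, and the bottom of the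
    completion when [A] meets neither [S] nor the top. *)
Lemma lub_exists (A : Sbar S le -> Prop) : exists u, is_lub S le A u.
Proof.
  destruct (classic (exists v, A v /\ proj1_sig v = ETop)) as [[v [Av Ev]] | noTop].
  { exists v; split; [intros w _; exact (lebar_top w v Ev) | intros w Hw; exact (Hw v Av)]. }
  set (M := fun s => exists v, A v /\ proj1_sig v = EMid s).
  assert (above_M : forall w, (forall v, A v -> lebar S le v w) ->
            forall s, M s -> exle S le (EMid s) (proj1_sig w)).
  { intros w Hw s [v [Av <-]]; exact (Hw v Av). }
  destruct (classic (exists s, M s)) as [[s0 Ms0] | noMid].
  - destruct (classic (exists b, forall s, M s -> le s b)) as [Mbdd | Munbdd].
    + destruct (proj2 Hcompl M (ex_intro _ s0 Ms0) Mbdd) as [m [Mm_ub Mm_least]].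
      exists (exist _ (EMid m) I); split.
      * intros [[|s|] p] Av; unfold lebar; simpl; auto.
        -- apply Mm_ub; exists (exist _ (EMid s) p); auto.
        -- apply noTop; exists (exist _ ETop p); auto.
      * intros [[|c|] p] Hw; unfold lebar; simpl; auto.
        -- exact (above_M _ Hw s0 Ms0).
        -- apply Mm_least; intros s Ms; exact (above_M _ Hw s Ms).
    + assert (noGreatest : ~ has_greatest S le).
      { intros [g Hg]; apply Munbdd; exists g; auto. }
      exists (exist (adm S le) ETop noGreatest); split.
      * intros v _; apply lebar_top; reflexivity.
      * intros [[|c|] p] Hw; unfold lebar; simpl; auto.
        -- exact (above_M _ Hw s0 Ms0).
        -- apply Munbdd; exists c; intros s Ms; exact (above_M _ Hw s Ms).
  - destruct Sbar_has_bottom as [b Hb]; exists b; split.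
    + intros [[|s|] p] Av; unfold lebar; simpl; auto.
      * exfalso; apply noMid; exists s, (exist _ (EMid s) p); auto.
      * exfalso; apply noTop; exists (exist _ ETop p); auto.
    + intros w _; apply Hb.
Qed.

End CompletionOrder.

Section Duality.

Variables (S : Type) (le : S -> S -> Prop).

Definition ext_flip (e : ext S) : ext S :=
  match e with EBot => ETop | EMid s => EMid s | ETop => EBot end.

Lemma adm_ext_flip e : adm S le e -> adm S (flip le) (ext_flip e).
Proof. destruct e; simpl; auto. Qed.

Definition Sbar_flip (u : Sbar S le) : Sbar S (flip le) :=
  exist _ (ext_flip (proj1_sig u)) (adm_ext_flip _ (proj2_sig u)).

Lemma lebar_flip (u v : Sbar S le) :
  lebar S (flip le) (Sbar_flip u) (Sbar_flip v) <-> lebar S le v u.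
Proof. destruct u as [[|s|] p], v as [[|t|] q]; unfold lebar; simpl; tauto. Qed.

Lemma order_complete_flip : order_complete S le -> order_complete S (flip le).
Proof. intros [glb lub]; split; [exact lub | exact glb]. Qed.

End Duality.

Lemma Sbar_flipK (S : Type) (le : S -> S -> Prop) (u : Sbar S le) :
  Sbar_flip S (flip le) (Sbar_flip S le u) = u.
Proof. apply Sbar_eq; destruct u as [[|s|] p]; reflexivity. Qed.

Lemma glb_exists (S : Type) (le : S -> S -> Prop) (Hcompl : order_complete S le)
  (A : Sbar S le -> Prop) :
  exists u, is_glb S le A u.
Proof.
  destruct (lub_exists S (flip le) (order_complete_flip S le Hcompl)
              (fun w => A (Sbar_flip S (flip le) w)))
    as [m [m_ub m_least]].
  exists (Sbar_flip S (flip le) m); split.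
  - intros v Av; rewrite <- (Sbar_flipK S le v).
    apply lebar_flip, m_ub; rewrite Sbar_flipK; exact Av.
  - intros w Hw; rewrite <- (Sbar_flipK S le w).
    apply lebar_flip, m_least; intros v Av.
    rewrite <- (Sbar_flipK S (flip le) v).
    apply lebar_flip, Hw, Av.
Qed.

Section Envelopes.

Variables (S : Type) (le : S -> S -> Prop).
Hypotheses (Hpo : partial_order S le) (Hcompl : order_complete S le).

Lemma supbar_spec (A : Sbar S le -> Prop) : is_lub S le A (supbar S le A).
Proof. unfold supbar; apply epsilon_spec, lub_exists, Hcompl. Qed.

Lemma infbar_spec (A : Sbar S le -> Prop) : is_glb S le A (infbar S le A).
Proof. unfold infbar; apply epsilon_spec, glb_exists, Hcompl. Qed.

Variables (Hs : Type) (actS : Hs -> S -> S).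
Hypothesis Hmono : forall a s1 s2, le s1 s2 -> le (actS a s1) (actS a s2).

Lemma actbar_mono a (u v : Sbar S le) :
  lebar S le u v -> lebar S le (actbar S le Hs actS a u) (actbar S le Hs actS a v).
Proof. destruct u as [[|s|] p], v as [[|t|] q]; unfold lebar; simpl; auto. Qed.

Variables (H X : Type) (actX : H -> X -> X) (h : H -> Hs).

Lemma equivariant_classHle phi :
  equivariant S le Hs actS H X actX h phi -> classHle S le Hs actS H X actX h phi.
Proof. intros Hphi a x; rewrite Hphi; apply lebar_refl, Hpo. Qed.

Lemma equivariant_classHge phi :
  equivariant S le Hs actS H X actX h phi -> classHge S le Hs actS H X actX h phi.
Proof. intros Hphi a x; rewrite Hphi; apply lebar_refl, Hpo. Qed.

Lemma lE_classHle (Phi : (X -> Sbar S le) -> Prop)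
  (HPhi : forall phi, Phi phi -> classHle S le Hs actS H X actX h phi) f :
  classHle S le Hs actS H X actX h (lE S le X Phi f).
Proof.
  intros a x; apply supbar_spec; intros v (phi & Hphi & Hf & ->).
  apply (lebar_trans S le Hpo _ (actbar S le Hs actS (h a) (phi x))).
  - exact (HPhi phi Hphi a x).
  - apply actbar_mono, supbar_spec; exists phi; auto.
Qed.

Lemma uE_classHge (Phi : (X -> Sbar S le) -> Prop)
  (HPhi : forall phi, Phi phi -> classHge S le Hs actS H X actX h phi) f :
  classHge S le Hs actS H X actX h (uE S le X Phi f).
Proof.
  intros a x; apply infbar_spec; intros v (phi & Hphi & Hf & ->).
  apply (lebar_trans S le Hpo _ (actbar S le Hs actS (h a) (phi x))).
  - apply actbar_mono, infbar_spec; exists phi; auto.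
  - exact (HPhi phi Hphi a x).
Qed.

Hypothesis actbar_invertible : forall a : Hs, exists b, forall u,
  actbar S le Hs actS b (actbar S le Hs actS a u) = u /\
  actbar S le Hs actS a (actbar S le Hs actS b u) = u.

Lemma lE_equivariant (Phi : (X -> Sbar S le) -> Prop)
  (HPhi : forall phi, Phi phi -> equivariant S le Hs actS H X actX h phi) f :
  classHbar S le Hs actS H X actX h (lE S le X Phi f).
Proof.
  intros a x; apply (lebar_antisym S le Hpo).
  { apply lE_classHle; intros phi Hphi; apply equivariant_classHle, HPhi, Hphi. }
  destruct (actbar_invertible (h a)) as [b Hb].
  rewrite <- (proj2 (Hb (lE S le X Phi f (actX a x)))).
  apply actbar_mono, supbar_spec; intros v (phi & Hphi & Hf & ->).
  rewrite <- (proj1 (Hb (phi x))), <- (HPhi phi Hphi).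
  apply actbar_mono, supbar_spec; exists phi; auto.
Qed.

Lemma uE_equivariant (Phi : (X -> Sbar S le) -> Prop)
  (HPhi : forall phi, Phi phi -> equivariant S le Hs actS H X actX h phi) f :
  classHbar S le Hs actS H X actX h (uE S le X Phi f).
Proof.
  intros a x; apply (lebar_antisym S le Hpo).
  2: { apply uE_classHge; intros phi Hphi; apply equivariant_classHge, HPhi, Hphi. }
  destruct (actbar_invertible (h a)) as [b Hb].
  rewrite <- (proj2 (Hb (uE S le X Phi f (actX a x)))).
  apply actbar_mono, infbar_spec; intros v (phi & Hphi & Hf & ->).
  rewrite <- (proj1 (Hb (phi x))), <- (HPhi phi Hphi).
  apply actbar_mono, infbar_spec; exists phi; auto.
Qed.

End Envelopes.

Lemma group_actbar_invertible (S Hs : Type) (le : S -> S -> Prop)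
  (mulHs : Hs -> Hs -> Hs) (actS : Hs -> S -> S)
  (HactS : semigroup_action Hs S mulHs actS) (Hgroup : is_group Hs mulHs) (a : Hs) :
  exists b, forall u,
    actbar S le Hs actS b (actbar S le Hs actS a u) = u /\
    actbar S le Hs actS a (actbar S le Hs actS b u) = u.
Proof.
  destruct HactS as [act_mul act_id], Hgroup as (e & He & Hinv).
  destruct (Hinv a) as [b [Hab Hba]]; exists b; intros u.
  split; apply Sbar_eq; destruct u as [[|s|] p]; simpl; auto;
    rewrite act_mul; [rewrite Hba | rewrite Hab]; rewrite act_id; auto.
Qed.

Theorem corollary1
  (H Hs X S : Type) (mulH : H -> H -> H) (mulHs : Hs -> Hs -> Hs)
  (HsgH : semigroup H mulH) (HsgHs : semigroup Hs mulHs)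
  (h : H -> Hs) (Hhom : semigroup_hom H Hs mulH mulHs h)
  (actX : H -> X -> X) (HactX : semigroup_action H X mulH actX)
  (le : S -> S -> Prop) (Hpo : partial_order S le)
  (actS : Hs -> S -> S) (HactS : semigroup_action Hs S mulHs actS)
  (Hmono : forall a s1 s2, le s1 s2 -> le (actS a s1) (actS a s2))
  (Hcompl : order_complete S le)
  (f : X -> Sbar S le) :
  (classHle S le Hs actS H X actX h (lE S le X (classH S le Hs actS H X actX h) f) /\
   classHle S le Hs actS H X actX h (lE S le X (classHbar S le Hs actS H X actX h) f) /\
   classHle S le Hs actS H X actX h (lE S le X (classHle S le Hs actS H X actX h) f) /\
   classHge S le Hs actS H X actX h (uE S le X (classH S le Hs actS H X actX h) f) /\
   classHge S le Hs actS H X actX h (uE S le X (classHbar S le Hs actS H X actX h) f) /\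
   classHge S le Hs actS H X actX h (uE S le X (classHge S le Hs actS H X actX h) f)) /\
  (is_group Hs mulHs ->
   classHbar S le Hs actS H X actX h (lE S le X (classH S le Hs actS H X actX h) f) /\
   classHbar S le Hs actS H X actX h (lE S le X (classHbar S le Hs actS H X actX h) f) /\
   classHbar S le Hs actS H X actX h (uE S le X (classH S le Hs actS H X actX h) f) /\
   classHbar S le Hs actS H X actX h (uE S le X (classHbar S le Hs actS H X actX h) f)).
Proof.
  assert (classH_equivariant :
            forall phi, classH S le Hs actS H X actX h phi ->
                        equivariant S le Hs actS H X actX h phi)
    by (intros phi Hphi; apply Hphi).
  pose proof (equivariant_classHle S le Hpo Hs actS H X actX h) as equivariant_le.
  pose proof (equivariant_classHge S le Hpo Hs actS H X actX h) as equivariant_ge.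
  split.
  - repeat split; first [apply lE_classHle | apply uE_classHge]; auto.
  - intros Hgroup.
    pose proof (group_actbar_invertible S Hs le mulHs actS HactS Hgroup) as Hinv.
    repeat split; first [apply lE_equivariant | apply uE_equivariant]; auto.
Qed.
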